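(* Let $\mathcal V$ be a variety of co-Heyting algebras. The following are equivalent: (1) $\mathcal V$ has the finite model property; (2) every algebra free in $\mathcal V$ is residually finite; (3) every algebra free in $\mathcal V$ is Hausdorff; (4) every algebra finitely presented in $\mathcal V$ is precompact and Hausdorff.
   Context: A co-Heyting algebra is a bounded distributive lattice $(L,0,1,\vee,\wedge)$ such that $a-b=\min\{c\in L: a\le b\vee c\}$ exists for all $a,b$; varieties, free and finitely presented algebras are in the sense of universal algebra for the language $\{0,1,\vee,\wedge,-\}$. $\mathcal V$ has the finite model property if for every term $t(x)$, whenever some algebra of $\mathcal V$ satisfies $\exists x\, t(x)\ne0$, some finite algebra of $\mathcal V$ does. $L$ is residually finite if for every nonzero $a\in L$ there is an ideal $I$ with $a\notin I$ and $L/I$ finite, where $L/I$ is the quotient by $a\equiv_I b\iff (a-b)\vee(b-a)\in I$. $\operatorname{Spec}L$ is the set of prime filters ordered by inclusion; height = foundation rank there; $\operatorname{codim}_La=\min\{\operatorname{height}\mathfrak p: a\in\mathfrak p\}$ ($+\infty$ if none); $dL=\{a:\operatorname{codim}_La\ge d\}$ (an ideal). $L$ is Hausdorff if every nonzero element has finite codimension; $L$ is precompact if $L/dL$ is finite for every positive integer $d$. *)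

From Stdlib Require Import List Arith.
Import ListNotations.

Inductive term : Type :=
| tVar  : nat -> term
| tZero : term
| tOne  : term
| tJoin : term -> term -> term
| tMeet : term -> term -> term
| tDiff : term -> term -> term.

Record coHeyting : Type := CoHeyting {
  carrier :> Type;
  zero : carrier;
  one  : carrier;
  join : carrier -> carrier -> carrier;
  meet : carrier -> carrier -> carrier;
  diff : carrier -> carrier -> carrier;
  joinA : forall a b c, join a (join b c) = join (join a b) c;
  meetA : forall a b c, meet a (meet b c) = meet (meet a b) c;
  joinC : forall a b, join a b = join b a;
  meetC : forall a b, meet a b = meet b a;
  join_meetK : forall a b, join a (meet a b) = a;
  meet_joinK : forall a b, meet a (join a b) = a;
  meet_joinDl : forall a b c, meet a (join b c) = join (meet a b) (meet a c);
  join0 : forall a, join zero a = a;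
  meet1 : forall a, meet one a = a;
  (* a - b = min { c : a <= b \/ c }, where x <= y means x \/ y = y *)
  diff_ge : forall a b, join a (join b (diff a b)) = join b (diff a b);
  diff_min : forall a b c, join a (join b c) = join b c ->
                           join (diff a b) c = c
}.

Section Algebra.
Variable A : coHeyting.

Definition le (a b : A) : Prop := join A a b = b.

Fixpoint eval (env : nat -> A) (t : term) : A :=
  match t with
  | tVar n => env n
  | tZero => zero A
  | tOne => one A
  | tJoin s u => join A (eval env s) (eval env u)
  | tMeet s u => meet A (eval env s) (eval env u)
  | tDiff s u => diff A (eval env s) (eval env u)
  end.

Definition finite_alg : Prop := exists l : list A, forall a : A, In a l.

Definition ideal (I : A -> Prop) : Prop :=
  I (zero A) /\
  (forall a b, I b -> le a b -> I a) /\
  (forall a b, I a -> I b -> I (join A a b)).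

Definition equiv_mod (I : A -> Prop) (a b : A) : Prop :=
  I (join A (diff A a b) (diff A b a)).

Definition quotient_finite (I : A -> Prop) : Prop :=
  exists l : list A, forall a : A, exists b, In b l /\ equiv_mod I a b.

Definition residually_finite : Prop :=
  forall a : A, a <> zero A ->
    exists I : A -> Prop, ideal I /\ ~ I a /\ quotient_finite I.

Definition prime_filter (p : A -> Prop) : Prop :=
  p (one A) /\
  (forall a b, p a -> le a b -> p b) /\
  (forall a b, p a -> p b -> p (meet A a b)) /\
  ~ p (zero A) /\
  (forall a b, p (join A a b) -> p a \/ p b).

Definition strict_sub (q p : A -> Prop) : Prop :=
  (forall x, q x -> p x) /\ exists x, p x /\ ~ q x.

(** [ht_le n p] : the foundation rank (height) of [p] in Spec A is <= n *)
Fixpoint ht_le (n : nat) (p : A -> Prop) : Prop :=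
  match n with
  | 0 => forall q, prime_filter q -> strict_sub q p -> False
  | S m => forall q, prime_filter q -> strict_sub q p -> ht_le m q
  end.

Definition codim_finite (a : A) : Prop :=
  exists (p : A -> Prop) (n : nat), prime_filter p /\ p a /\ ht_le n p.

Definition codim_ge (d : nat) (a : A) : Prop :=
  forall p : A -> Prop, prime_filter p -> p a ->
    forall m, m < d -> ~ ht_le m p.

Definition dL (d : nat) : A -> Prop := codim_ge d.

Definition hausdorff : Prop :=
  forall a : A, a <> zero A -> codim_finite a.

Definition precompact : Prop :=
  forall d : nat, 0 < d -> quotient_finite (dL d).

End Algebra.

Arguments eval {A}.

Definition hom (A B : coHeyting) (h : A -> B) : Prop :=
  h (zero A) = zero B /\ h (one A) = one B /\
  (forall a b, h (join A a b) = join B (h a) (h b)) /\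
  (forall a b, h (meet A a b) = meet B (h a) (h b)) /\
  (forall a b, h (diff A a b) = diff B (h a) (h b)).

Definition equations := term -> term -> Prop.

Definition in_V (E : equations) (A : coHeyting) : Prop :=
  forall s t, E s t -> forall env : nat -> A, eval env s = eval env t.

Definition fmp (E : equations) : Prop :=
  forall t : term,
    (exists A : coHeyting, in_V E A /\ exists env : nat -> A, eval env t <> zero A) ->
    (exists A : coHeyting, in_V E A /\ finite_alg A /\
        exists env : nat -> A, eval env t <> zero A).

Definition is_free (E : equations) (F : coHeyting) : Prop :=
  in_V E F /\
  exists (X : Type) (i : X -> F),
    forall B : coHeyting, in_V E B -> forall f : X -> B,
      exists h : F -> B, hom F B h /\ (forall x, h (i x) = f x) /\
        forall h' : F -> B, hom F B h' -> (forall x, h' (i x) = f x) ->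
          forall a, h' a = h a.

Fixpoint vars_lt (n : nat) (t : term) : Prop :=
  match t with
  | tVar k => k < n
  | tZero | tOne => True
  | tJoin s u | tMeet s u | tDiff s u => vars_lt n s /\ vars_lt n u
  end.

Definition is_fp (E : equations) (A : coHeyting) : Prop :=
  in_V E A /\
  exists (n : nat) (R : list (term * term)) (g : nat -> A),
    (forall st, In st R -> vars_lt n (fst st) /\ vars_lt n (snd st)) /\
    (forall st, In st R -> eval g (fst st) = eval g (snd st)) /\
    forall B : coHeyting, in_V E B -> forall b : nat -> B,
      (forall st, In st R -> eval b (fst st) = eval b (snd st)) ->
      exists h : A -> B, hom A B h /\ (forall k, k < n -> h (g k) = b k) /\
        forall h' : A -> B, hom A B h' -> (forall k, k < n -> h' (g k) = b k) ->
          forall a, h' a = h a.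

(* If V has the finite model property, every nonzero element [a] of a free or finitely
   presented algebra is a term in finitely many generators, and a finite algebra of V in
   which that term (for a presentation: the term minus the join of the relators) does
   not vanish yields a homomorphism [h] onto a finite algebra with [h a <> 0].  Its
   kernel is an ideal of finite index avoiding [a], and the preimage of an atom below
   [h a] is a prime filter containing [a] whose height is bounded by the size of the
   image.

   Every finitely generated algebra is precompact: whether a prime filter of height at
   most [d] contains a given element is determined by a finite code (which generators
   it contains, and which codes of smaller height occur strictly below it).  This is
   proved by induction on terms, the key case being that [a - b] in [p] yields a prime
   filter [q] inside [p] with [a] in [q] and [b] not in [q].

   Conversely, a term that does not vanish in some algebra of V does not vanish in the
   free algebra of finite rank, which is also finitely presented and precompact;
   residual finiteness, resp. finite codimension, then provides a finite quotient (by an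
   ideal, resp. by [dL]) in which the term is still nonzero. *)

From Stdlib Require Import List Arith Lia Cantor.
From Stdlib Require Import Classical ClassicalEpsilon FunctionalExtensionality PropExtensionality ProofIrrelevance.
Import ListNotations.

Section Lattice.
Variable L : coHeyting.
Notation "x ⊔ y" := (join L x y) (at level 50).
Notation "x ⊓ y" := (meet L x y) (at level 40).
Notation "x ∖ y" := (diff L x y) (at level 45).
Notation "x ≤ y" := (le L x y) (at level 70).
Notation "0" := (zero L).
Notation "1" := (one L).

Lemma join_idem a : a ⊔ a = a.
Proof. rewrite <- (meet_joinK L a a) at 2. apply join_meetK. Qed.

Lemma le_refl a : a ≤ a.
Proof. apply join_idem. Qed.

Lemma le_trans a b c : a ≤ b -> b ≤ c -> a ≤ c.
Proof. unfold le; intros Hab Hbc. rewrite <- Hbc, joinA, Hab. reflexivity. Qed.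

Lemma le_antisym a b : a ≤ b -> b ≤ a -> a = b.
Proof. unfold le; intros Hab Hba. rewrite <- Hab, joinC. symmetry; exact Hba. Qed.

Lemma le_joinl a b : a ≤ a ⊔ b.
Proof. unfold le. rewrite joinA, join_idem. reflexivity. Qed.

Lemma le_joinr a b : b ≤ a ⊔ b.
Proof. rewrite joinC. apply le_joinl. Qed.

Lemma join_lub a b c : a ≤ c -> b ≤ c -> a ⊔ b ≤ c.
Proof. unfold le; intros Hac Hbc. rewrite <- joinA, Hbc, Hac. reflexivity. Qed.

Lemma le_join_of_lel a x y : a ≤ x -> a ≤ x ⊔ y.
Proof. intro H. eapply le_trans; [exact H | apply le_joinl]. Qed.

Lemma le_join_of_ler a x y : a ≤ y -> a ≤ x ⊔ y.
Proof. intro H. eapply le_trans; [exact H | apply le_joinr]. Qed.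

Ltac solve_le_join :=
  repeat apply join_lub;
  first [ apply le_refl
        | apply le_join_of_lel; solve_le_join
        | apply le_join_of_ler; solve_le_join ].

Lemma le_meet_eq a b : a ≤ b <-> a ⊓ b = a.
Proof.
  unfold le; split; intro H.
  - rewrite <- H. apply meet_joinK.
  - rewrite <- H, joinC, meetC. apply join_meetK.
Qed.

Lemma le_meetl a b : a ⊓ b ≤ a.
Proof.
  apply le_meet_eq. rewrite meetC, meetA.
  rewrite <- (join_meetK L a a) at 2. rewrite meet_joinK. reflexivity.
Qed.

Lemma le_meetr a b : a ⊓ b ≤ b.
Proof. rewrite meetC. apply le_meetl. Qed.

Lemma meet_glb a b c : c ≤ a -> c ≤ b -> c ≤ a ⊓ b.
Proof. rewrite !le_meet_eq; intros Ha Hb. rewrite meetA, Ha, Hb. reflexivity. Qed.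

Lemma join0r a : a ⊔ 0 = a.
Proof. rewrite joinC. apply join0. Qed.

Lemma le0x a : 0 ≤ a.
Proof. apply join0. Qed.

Lemma lex1 a : a ≤ 1.
Proof. apply le_meet_eq. rewrite meetC. apply meet1. Qed.

Lemma le0_eq a : a ≤ 0 -> a = 0.
Proof. unfold le. rewrite join0r. auto. Qed.

Lemma join_mono a b c d : a ≤ b -> c ≤ d -> a ⊔ c ≤ b ⊔ d.
Proof.
  intros Hab Hcd. apply join_lub.
  - apply le_join_of_lel, Hab.
  - apply le_join_of_ler, Hcd.
Qed.

Lemma meet_mono a b c d : a ≤ b -> c ≤ d -> a ⊓ c ≤ b ⊓ d.
Proof.
  intros Hab Hcd. apply meet_glb.
  - eapply le_trans; [apply le_meetl | exact Hab].
  - eapply le_trans; [apply le_meetr | exact Hcd].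
Qed.

Lemma meet_joinDr a b c : (b ⊔ c) ⊓ a = (b ⊓ a) ⊔ (c ⊓ a).
Proof. rewrite meetC, meet_joinDl, (meetC L a b), (meetC L a c). reflexivity. Qed.

Lemma meet_join_le a b x y : (a ⊔ x) ⊓ (b ⊔ y) ≤ (a ⊓ b) ⊔ (x ⊔ y).
Proof.
  rewrite meet_joinDl, !meet_joinDr. repeat apply join_lub.
  - apply le_joinl.
  - eapply le_trans; [apply le_meetl | solve_le_join].
  - eapply le_trans; [apply le_meetr | solve_le_join].
  - eapply le_trans; [apply le_meetr | solve_le_join].
Qed.

Lemma join_join_swap a b c d : (a ⊔ b) ⊔ (c ⊔ d) = (a ⊔ c) ⊔ (b ⊔ d).
Proof. rewrite <- !joinA. f_equal. rewrite !joinA. f_equal. apply joinC. Qed.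

Lemma le_join_diff a b : a ≤ b ⊔ (a ∖ b).
Proof. apply diff_ge. Qed.

Lemma diff_le_iff a b c : a ∖ b ≤ c <-> a ≤ b ⊔ c.
Proof.
  split; intro H.
  - eapply le_trans; [apply le_join_diff | apply join_mono; [apply le_refl | exact H]].
  - apply diff_min, H.
Qed.

Lemma diff_eq0 a b : a ∖ b = 0 <-> a ≤ b.
Proof.
  split; intro H.
  - eapply le_trans; [apply le_join_diff |]. rewrite H, join0r. apply le_refl.
  - apply le0_eq, diff_le_iff. rewrite join0r. exact H.
Qed.

Lemma diff_self a : a ∖ a = 0.
Proof. apply diff_eq0, le_refl. Qed.

Lemma diff0x a : 0 ∖ a = 0.
Proof. apply diff_eq0, le0x. Qed.

Lemma diffx0 a : a ∖ 0 = a.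
Proof.
  apply le_antisym.
  - apply diff_le_iff. rewrite join0. apply le_refl.
  - eapply le_trans; [apply (le_join_diff a 0) |]. rewrite join0. apply le_refl.
Qed.

Lemma diff_triangle a b c : a ∖ c ≤ (a ∖ b) ⊔ (b ∖ c).
Proof.
  apply diff_le_iff. eapply le_trans; [apply (le_join_diff a b) |].
  rewrite (joinC L (a ∖ b)), joinA. apply join_mono; [apply le_join_diff | apply le_refl].
Qed.

Definition symdiff a b := (a ∖ b) ⊔ (b ∖ a).

Lemma symdiff_self a : symdiff a a = 0.
Proof. unfold symdiff. rewrite diff_self. apply join0. Qed.

Lemma symdiffx0 a : symdiff a 0 = a.
Proof. unfold symdiff. rewrite diffx0, diff0x. apply join0r. Qed.

Lemma symdiff_triangle a b c : symdiff a c ≤ symdiff a b ⊔ symdiff b c.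
Proof.
  unfold symdiff. apply join_lub.
  - eapply le_trans; [apply (diff_triangle a b c) |]. apply join_mono; apply le_joinl.
  - eapply le_trans; [apply (diff_triangle c b a) |].
    rewrite joinC. apply join_mono; apply le_joinr.
Qed.

Lemma symdiff_join a b a' b' : symdiff (a ⊔ b) (a' ⊔ b') ≤ symdiff a a' ⊔ symdiff b b'.
Proof.
  assert (H : forall a b a' b', (a ⊔ b) ∖ (a' ⊔ b') ≤ (a ∖ a') ⊔ (b ∖ b')).
  { intros. apply diff_le_iff. rewrite join_join_swap. apply join_mono; apply le_join_diff. }
  unfold symdiff. apply join_lub; (eapply le_trans; [apply H | solve_le_join]).
Qed.

Lemma symdiff_meet a b a' b' : symdiff (a ⊓ b) (a' ⊓ b') ≤ symdiff a a' ⊔ symdiff b b'.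
Proof.
  assert (H : forall a b a' b', (a ⊓ b) ∖ (a' ⊓ b') ≤ (a ∖ a') ⊔ (b ∖ b')).
  { intros. apply diff_le_iff. eapply le_trans; [| apply meet_join_le].
    apply meet_mono; apply le_join_diff. }
  unfold symdiff. apply join_lub; (eapply le_trans; [apply H | solve_le_join]).
Qed.

Lemma symdiff_diff a b a' b' : symdiff (a ∖ b) (a' ∖ b') ≤ symdiff a a' ⊔ symdiff b b'.
Proof.
  assert (H : forall a b a' b', (a ∖ b) ∖ (a' ∖ b') ≤ (a ∖ a') ⊔ (b' ∖ b)).
  { clear; intros a b a' b'. apply diff_le_iff, diff_le_iff.
    eapply le_trans; [apply (le_join_diff a a') |].
    eapply le_trans; [apply join_mono; [apply (le_join_diff a' b') | apply le_refl] |].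
    eapply le_trans;
      [apply join_mono; [apply join_mono; [apply (le_join_diff b' b) | apply le_refl]
                        | apply le_refl] |].
    solve_le_join. }
  unfold symdiff. apply join_lub; (eapply le_trans; [apply H | solve_le_join]).
Qed.

Lemma symdiff_diff_min a b c :
  symdiff ((a ∖ b) ⊔ c) c ≤ symdiff (a ⊔ (b ⊔ c)) (b ⊔ c).
Proof.
  unfold symdiff. apply le_join_of_lel.
  assert (H : c ∖ ((a ∖ b) ⊔ c) = 0) by apply diff_eq0, le_joinr.
  rewrite H, join0r. apply diff_le_iff. apply join_lub; [| apply le_joinl].
  apply diff_le_iff. rewrite joinA.
  eapply le_trans; [apply (le_joinl a (b ⊔ c)) |].
  eapply le_trans; [apply le_join_diff |]. rewrite joinA. apply le_refl.
Qed.
End Lattice.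

Lemma sig_ext {T : Type} {P : T -> Prop} (x y : sig P) : proj1_sig x = proj1_sig y -> x = y.
Proof. apply eq_sig_hprop. intros; apply proof_irrelevance. Qed.

Lemma hom_eval A B h env t : hom A B h -> h (eval env t) = eval (fun k => h (env k)) t.
Proof. intros (H0 & H1 & Hj & Hm & Hd). induction t; simpl; congruence. Qed.

Lemma hom_le A B h a b : hom A B h -> le A a b -> le B (h a) (h b).
Proof. intros (_ & _ & Hj & _) H. unfold le in *. rewrite <- Hj, H. reflexivity. Qed.

Lemma hom_id A : hom A A (fun x => x).
Proof. repeat split. Qed.

Lemma hom_comp A B C f h : hom A B f -> hom B C h -> hom A C (fun x => h (f x)).
Proof.
  intros (f0 & f1 & fj & fm & fd) (h0 & h1 & hj & hm & hd).
  repeat split; intros; congruence.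
Qed.

Lemma eval_ext (A : coHeyting) n t (e1 e2 : nat -> A) :
  vars_lt n t -> (forall k, k < n -> e1 k = e2 k) -> eval e1 t = eval e2 t.
Proof.
  intros Hv He. induction t; simpl in *; try reflexivity;
    [apply He, Hv | ..]; destruct Hv; f_equal; auto.
Qed.

Lemma in_V_image E A B h :
  hom A B h -> (forall y, exists x, h x = y) -> in_V E A -> in_V E B.
Proof.
  intros Hh Hsurj HA s t Hst env.
  destruct (choice (fun k x => h x = env k) (fun k => Hsurj (env k))) as [env' Henv'].
  replace env with (fun k => h (env' k)) by (extensionality k; apply Henv').
  rewrite <- !(hom_eval _ _ _ _ _ Hh). f_equal. apply HA, Hst.
Qed.

Lemma in_V_preimage E A B h :
  hom A B h -> (forall x y, h x = h y -> x = y) -> in_V E B -> in_V E A.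
Proof.
  intros Hh Hinj HB s t Hst env. apply Hinj.
  rewrite !(hom_eval _ _ _ _ _ Hh). apply HB, Hst.
Qed.

(** * Quotients *)

Record setoid_coHeyting : Type := SetoidCoHeyting {
  scarrier : Type;
  sequiv : scarrier -> scarrier -> Prop;
  szero : scarrier;
  sone : scarrier;
  sjoin : scarrier -> scarrier -> scarrier;
  smeet : scarrier -> scarrier -> scarrier;
  sdiff : scarrier -> scarrier -> scarrier;
  sequiv_refl : forall a, sequiv a a;
  sequiv_sym : forall a b, sequiv a b -> sequiv b a;
  sequiv_trans : forall a b c, sequiv a b -> sequiv b c -> sequiv a c;
  sjoin_compat : forall a a' b b', sequiv a a' -> sequiv b b' ->
                   sequiv (sjoin a b) (sjoin a' b');
  smeet_compat : forall a a' b b', sequiv a a' -> sequiv b b' ->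
                   sequiv (smeet a b) (smeet a' b');
  sdiff_compat : forall a a' b b', sequiv a a' -> sequiv b b' ->
                   sequiv (sdiff a b) (sdiff a' b');
  sjoinA : forall a b c, sequiv (sjoin a (sjoin b c)) (sjoin (sjoin a b) c);
  smeetA : forall a b c, sequiv (smeet a (smeet b c)) (smeet (smeet a b) c);
  sjoinC : forall a b, sequiv (sjoin a b) (sjoin b a);
  smeetC : forall a b, sequiv (smeet a b) (smeet b a);
  sjoin_meetK : forall a b, sequiv (sjoin a (smeet a b)) a;
  smeet_joinK : forall a b, sequiv (smeet a (sjoin a b)) a;
  smeet_joinDl : forall a b c,
    sequiv (smeet a (sjoin b c)) (sjoin (smeet a b) (smeet a c));
  sjoin0 : forall a, sequiv (sjoin szero a) a;
  smeet1 : forall a, sequiv (smeet sone a) a;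
  sdiff_ge : forall a b,
    sequiv (sjoin a (sjoin b (sdiff a b))) (sjoin b (sdiff a b));
  sdiff_min : forall a b c, sequiv (sjoin a (sjoin b c)) (sjoin b c) ->
    sequiv (sjoin (sdiff a b) c) c
}.

Section SetoidQuotient.
Variable S : setoid_coHeyting.
Notation T := (scarrier S).
Notation R := (sequiv S).

(* Classes are represented by the predicates [R a], so that no quotient types are needed. *)
Definition qcarrier := {P : T -> Prop | exists a, P = R a}.

Definition qclass (a : T) : qcarrier := exist _ (R a) (ex_intro _ a eq_refl).

Lemma qclass_eq a b : qclass a = qclass b <-> R a b.
Proof.
  split; intro H.
  - apply (f_equal (@proj1_sig _ _)) in H. simpl in H.
    apply sequiv_sym. rewrite <- H. apply sequiv_refl.
  - apply sig_ext. simpl. extensionality c. apply propositional_extensionality.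
    split; intro; eapply sequiv_trans; eauto using sequiv_sym.
Qed.

Lemma qclass_surj (x : qcarrier) : exists a, x = qclass a.
Proof. destruct x as [P [a Ha]]. exists a. apply sig_ext. exact Ha. Qed.

Definition qrep (x : qcarrier) : T :=
  proj1_sig (constructive_indefinite_description _ (qclass_surj x)).

Lemma qclass_rep x : qclass (qrep x) = x.
Proof. unfold qrep. destruct constructive_indefinite_description. simpl. auto. Qed.

Lemma qrep_class a : R (qrep (qclass a)) a.
Proof. apply qclass_eq, qclass_rep. Qed.

Definition qlift (op : T -> T -> T) (x y : qcarrier) : qcarrier :=
  qclass (op (qrep x) (qrep y)).

Lemma qlift_class op :
  (forall a a' b b', R a a' -> R b b' -> R (op a b) (op a' b')) ->
  forall a b, qlift op (qclass a) (qclass b) = qclass (op a b).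
Proof.
  intros Hop a b. apply qclass_eq. apply Hop; apply qrep_class.
Qed.

Lemma qjoin_class a b : qlift (sjoin S) (qclass a) (qclass b) = qclass (sjoin S a b).
Proof. apply qlift_class, sjoin_compat. Qed.
Lemma qmeet_class a b : qlift (smeet S) (qclass a) (qclass b) = qclass (smeet S a b).
Proof. apply qlift_class, smeet_compat. Qed.
Lemma qdiff_class a b : qlift (sdiff S) (qclass a) (qclass b) = qclass (sdiff S a b).
Proof. apply qlift_class, sdiff_compat. Qed.

Definition quotient_algebra : coHeyting.
Proof.
  refine (CoHeyting qcarrier (qclass (szero S)) (qclass (sone S))
            (qlift (sjoin S)) (qlift (smeet S)) (qlift (sdiff S))
            _ _ _ _ _ _ _ _ _ _ _);
  intros;
  repeat match goal with x : qcarrier |- _ => destruct (qclass_surj x) as [? ->]; clear x end;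
  repeat rewrite ?qjoin_class, ?qmeet_class, ?qdiff_class in *;
  apply qclass_eq.
  - apply sjoinA. - apply smeetA. - apply sjoinC. - apply smeetC.
  - apply sjoin_meetK. - apply smeet_joinK. - apply smeet_joinDl.
  - apply sjoin0. - apply smeet1. - apply sdiff_ge.
  - apply sdiff_min, qclass_eq. assumption.
Defined.

Lemma qclass_join a b :
  qclass (sjoin S a b) = join quotient_algebra (qclass a) (qclass b).
Proof. symmetry; apply qjoin_class. Qed.
Lemma qclass_meet a b :
  qclass (smeet S a b) = meet quotient_algebra (qclass a) (qclass b).
Proof. symmetry; apply qmeet_class. Qed.
Lemma qclass_diff a b :
  qclass (sdiff S a b) = diff quotient_algebra (qclass a) (qclass b).
Proof. symmetry; apply qdiff_class. Qed.
End SetoidQuotient.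

Section IdealQuotient.
Variable L : coHeyting.
Variable I : L -> Prop.
Hypothesis HI : ideal L I.

Lemma ideal0 : I (zero L).
Proof. apply HI. Qed.

Lemma ideal_down a b : I b -> le L a b -> I a.
Proof. apply HI. Qed.

Lemma ideal_join a b : I a -> I b -> I (join L a b).
Proof. apply HI. Qed.

Lemma equiv_mod_of_eq a b : a = b -> equiv_mod L I a b.
Proof. intros <-. unfold equiv_mod. fold (symdiff L a a). rewrite symdiff_self. apply ideal0. Qed.

Lemma equiv_mod_compat (op : L -> L -> L) :
  (forall a b a' b', le L (symdiff L (op a b) (op a' b')) (join L (symdiff L a a') (symdiff L b b'))) ->
  forall a a' b b', equiv_mod L I a a' -> equiv_mod L I b b' ->
    equiv_mod L I (op a b) (op a' b').
Proof.
  unfold equiv_mod; fold (symdiff L). intros Hop a a' b b' Ha Hb.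
  eapply ideal_down; [apply ideal_join; [exact Ha | exact Hb] | apply Hop].
Qed.

Definition ideal_setoid : setoid_coHeyting.
Proof.
  refine (SetoidCoHeyting L (equiv_mod L I) (zero L) (one L) (join L) (meet L) (diff L)
            _ _ _ _ _ _ _ _ _ _ _ _ _ _ _ _ _).
  all: try (intros; apply equiv_mod_of_eq;
            first [ reflexivity | apply joinA | apply meetA | apply joinC | apply meetC
                  | apply join_meetK | apply meet_joinK | apply meet_joinDl
                  | apply join0 | apply meet1 | apply diff_ge ]).
  - intros a b. unfold equiv_mod. rewrite joinC. auto.
  - intros a b c Hab Hbc. eapply ideal_down; [apply ideal_join; [exact Hab | exact Hbc] |].
    apply symdiff_triangle.
  - apply equiv_mod_compat, symdiff_join.
  - apply equiv_mod_compat, symdiff_meet.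
  - apply equiv_mod_compat, symdiff_diff.
  - intros a b c H. eapply ideal_down; [exact H | apply symdiff_diff_min].
Defined.

Definition ideal_quotient : coHeyting := quotient_algebra ideal_setoid.

Definition quotient_map : L -> ideal_quotient := qclass ideal_setoid.

Lemma quotient_map_hom : hom L ideal_quotient quotient_map.
Proof.
  repeat split; intros;
    [apply qclass_join | apply qclass_meet | apply qclass_diff].
Qed.

Lemma quotient_map_surj y : exists x, quotient_map x = y.
Proof. destruct (qclass_surj ideal_setoid y) as [x ->]. eauto. Qed.

Lemma quotient_map_eq0 a : quotient_map a = zero ideal_quotient <-> I a.
Proof.
  unfold quotient_map. simpl. rewrite qclass_eq. simpl. unfold equiv_mod.
  fold (symdiff L a (zero L)). rewrite symdiffx0. tauto.
Qed.

Lemma ideal_quotient_in_V E : in_V E L -> in_V E ideal_quotient.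
Proof. apply in_V_image with quotient_map; [apply quotient_map_hom | apply quotient_map_surj]. Qed.

Lemma ideal_quotient_finite : quotient_finite L I -> finite_alg ideal_quotient.
Proof.
  intros [l Hl]. exists (map quotient_map l). intro x.
  destruct (quotient_map_surj x) as [a <-]. destruct (Hl a) as [b [Hb Hab]].
  apply in_map_iff. exists b. split; [| exact Hb].
  apply qclass_eq. simpl. apply (sequiv_sym ideal_setoid). exact Hab.
Qed.
End IdealQuotient.

Section Subalgebra.
Variable L : coHeyting.
Variable S : L -> Prop.
Hypothesis S0 : S (zero L).
Hypothesis S1 : S (one L).
Hypothesis Sjoin : forall a b, S a -> S b -> S (join L a b).
Hypothesis Smeet : forall a b, S a -> S b -> S (meet L a b).
Hypothesis Sdiff : forall a b, S a -> S b -> S (diff L a b).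

Definition subalgebra : coHeyting.
Proof.
  refine (CoHeyting {x | S x} (exist _ _ S0) (exist _ _ S1)
    (fun x y => exist _ _ (Sjoin _ _ (proj2_sig x) (proj2_sig y)))
    (fun x y => exist _ _ (Smeet _ _ (proj2_sig x) (proj2_sig y)))
    (fun x y => exist _ _ (Sdiff _ _ (proj2_sig x) (proj2_sig y)))
    _ _ _ _ _ _ _ _ _ _ _); intros; apply sig_ext; simpl.
  - apply joinA. - apply meetA. - apply joinC. - apply meetC.
  - apply join_meetK. - apply meet_joinK. - apply meet_joinDl.
  - apply join0. - apply meet1. - apply diff_ge.
  - apply diff_min. apply (f_equal (@proj1_sig _ _)) in H. exact H.
Defined.

Lemma subalgebra_incl_hom : hom subalgebra L (@proj1_sig _ _).
Proof. repeat split. Qed.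

Lemma subalgebra_in_V E : in_V E L -> in_V E subalgebra.
Proof. apply in_V_preimage with (@proj1_sig _ _); [apply subalgebra_incl_hom | apply sig_ext]. Qed.
End Subalgebra.

(** * The free algebra of rank [n] *)

Fixpoint subst (sg : nat -> term) (t : term) : term :=
  match t with
  | tVar k => sg k
  | tZero => tZero
  | tOne => tOne
  | tJoin a b => tJoin (subst sg a) (subst sg b)
  | tMeet a b => tMeet (subst sg a) (subst sg b)
  | tDiff a b => tDiff (subst sg a) (subst sg b)
  end.

Lemma eval_subst (A : coHeyting) (env : nat -> A) sg t :
  eval env (subst sg t) = eval (fun k => eval env (sg k)) t.
Proof. induction t; simpl; congruence. Qed.

Fixpoint var_bound (t : term) : nat :=
  match t with
  | tVar k => S k
  | tZero | tOne => 0
  | tJoin a b | tMeet a b | tDiff a b => Nat.max (var_bound a) (var_bound b)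
  end.

Lemma vars_lt_mono n m t : vars_lt n t -> n <= m -> vars_lt m t.
Proof. induction t; simpl; intuition lia. Qed.

Lemma vars_lt_var_bound t : vars_lt (var_bound t) t.
Proof. induction t; simpl; auto; split; eapply vars_lt_mono; eauto; lia. Qed.

Section TermModel.
Variable E : equations.
Variable n : nat.

(* Variables from [n] on are sent to [0], so that the term model is generated by
   the classes of the first [n] variables. *)
Definition truncate (A : coHeyting) (env : nat -> A) : nat -> A :=
  fun k => if lt_dec k n then env k else zero A.

Definition term_equiv (s t : term) : Prop :=
  forall A : coHeyting, in_V E A -> forall env : nat -> A,
    eval (truncate A env) s = eval (truncate A env) t.

Definition term_setoid : setoid_coHeyting.
Proof.
  refine (SetoidCoHeyting term term_equiv tZero tOne tJoin tMeet tDiff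
            _ _ _ _ _ _ _ _ _ _ _ _ _ _ _ _ _); unfold term_equiv; simpl.
  4-6: intros a a' b b' Ha Hb A HA env; rewrite (Ha A HA env), (Hb A HA env); reflexivity.
  4-13: intros.
  - reflexivity.
  - intros a b H A HA env. symmetry; apply H, HA.
  - intros a b c Hab Hbc A HA env. rewrite (Hab A HA env). apply Hbc, HA.
  - apply joinA. - apply meetA. - apply joinC. - apply meetC.
  - apply join_meetK. - apply meet_joinK. - apply meet_joinDl.
  - apply join0. - apply meet1. - apply diff_ge.
  - intros a b c H A HA env. apply diff_min, H, HA.
Defined.

Definition term_model : coHeyting := quotient_algebra term_setoid.

Definition tgen (k : nat) : term_model := qclass term_setoid (tVar k).

Lemma eval_tgen t : eval tgen t = qclass term_setoid t.
Proof.
  induction t; simpl; try reflexivity; rewrite IHt1, IHt2;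
    [apply qjoin_class | apply qmeet_class | apply qdiff_class].
Qed.

Lemma tgen_ge k : n <= k -> tgen k = zero term_model.
Proof.
  intro Hk. apply qclass_eq. intros A HA env. simpl. unfold truncate.
  destruct (lt_dec k n); [lia | reflexivity].
Qed.

Lemma term_model_in_V : in_V E term_model.
Proof.
  intros s t Hst env.
  assert (Heval : forall u, eval env u = qclass term_setoid (subst (fun k => qrep _ (env k)) u)).
  { induction u; simpl; try reflexivity; [symmetry; apply qclass_rep | ..];
      rewrite IHu1, IHu2; symmetry; [apply qclass_join | apply qclass_meet | apply qclass_diff]. }
  rewrite !Heval. apply qclass_eq. intros A HA env'. simpl. rewrite !eval_subst.
  apply HA, Hst.
Qed.

Definition term_model_lift (B : coHeyting) (b : nat -> B) (x : term_model) : B :=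
  eval (truncate B b) (qrep term_setoid x).

Lemma term_model_lift_class B b t : in_V E B ->
  term_model_lift B b (qclass term_setoid t) = eval (truncate B b) t.
Proof. intro HB. apply (qrep_class term_setoid t B HB). Qed.

Lemma term_model_lift_hom B b : in_V E B -> hom term_model B (term_model_lift B b).
Proof.
  intro HB. unfold term_model. repeat split; [apply (term_model_lift_class B b tZero HB)
                          | apply (term_model_lift_class B b tOne HB) | ..];
  intros x y; destruct (qclass_surj term_setoid x) as [s ->];
  destruct (qclass_surj term_setoid y) as [t ->];
  rewrite <- ?qclass_join, <- ?qclass_meet, <- ?qclass_diff, !term_model_lift_class by exact HB;
  reflexivity.
Qed.

Lemma term_model_lift_unique B b h : in_V E B -> hom term_model B h ->
  (forall k, k < n -> h (tgen k) = b k) -> forall x, h x = term_model_lift B b x.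
Proof.
  intros HB Hh Hgen x. destruct (qclass_surj term_setoid x) as [t ->].
  rewrite term_model_lift_class by exact HB.
  rewrite <- eval_tgen, (hom_eval _ _ _ _ _ Hh).
  apply eval_ext with (var_bound t); [apply vars_lt_var_bound |].
  intros k _. unfold truncate. destruct (lt_dec k n) as [Hk | Hk]; [auto |].
  rewrite tgen_ge by lia. apply Hh.
Qed.

Lemma term_model_lift_tgen B b k : in_V E B -> k < n -> term_model_lift B b (tgen k) = b k.
Proof.
  intros HB Hk. unfold tgen. rewrite term_model_lift_class by exact HB. simpl.
  unfold truncate. destruct (lt_dec k n); [reflexivity | lia].
Qed.

Lemma term_model_fp : is_fp E term_model.
Proof.
  split; [apply term_model_in_V |]. exists n, [], tgen.
  split; [simpl; tauto |]. split; [simpl; tauto |].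
  intros B HB b _. exists (term_model_lift B b).
  split; [apply term_model_lift_hom, HB |]. split.
  - intros k Hk. apply term_model_lift_tgen; assumption.
  - intros h Hh Hgen. apply term_model_lift_unique; assumption.
Qed.

Lemma term_model_free : is_free E term_model.
Proof.
  split; [apply term_model_in_V |]. exists {k | k < n}, (fun k => tgen (proj1_sig k)).
  intros B HB f.
  set (b := fun k => match lt_dec k n with left Hk => f (exist _ k Hk) | right _ => zero B end).
  assert (Hb : forall k, b (proj1_sig k) = f k).
  { intros [k Hk]. unfold b. simpl. destruct (lt_dec k n); [| lia].
    f_equal. apply sig_ext. reflexivity. }
  exists (term_model_lift B b). split; [apply term_model_lift_hom, HB |]. split.
  - intros [k Hk]. rewrite term_model_lift_tgen by assumption. apply (Hb (exist _ k Hk)).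
  - intros h Hh Hgen. apply term_model_lift_unique; [assumption .. |].
    intros k Hk. transitivity (f (exist _ k Hk)); [apply (Hgen (exist _ k Hk)) |].
    symmetry. apply (Hb (exist _ k Hk)).
Qed.

Lemma term_model_generated (x : term_model) : exists t, vars_lt n t /\ x = eval tgen t.
Proof.
  destruct (qclass_surj term_setoid x) as [t ->].
  exists (subst (fun k => if lt_dec k n then tVar k else tZero) t). split.
  - clear. induction t; simpl; auto. destruct (lt_dec n0 n); simpl; auto.
  - rewrite eval_subst, <- eval_tgen.
    apply eval_ext with (var_bound t); [apply vars_lt_var_bound |].
    intros k _. destruct (lt_dec k n); simpl; [reflexivity |]. apply tgen_ge. lia.
Qed.

Lemma term_model_nonzero t (A : coHeyting) env : in_V E A -> vars_lt n t ->
  eval env t <> zero A -> eval tgen t <> zero term_model.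
Proof.
  intros HA Hv Hne H. rewrite eval_tgen in H. apply qclass_eq in H.
  specialize (H A HA env). simpl in H. apply Hne. rewrite <- H.
  apply eval_ext with n; [exact Hv |]. intros k Hk. unfold truncate.
  destruct (lt_dec k n); [reflexivity | lia].
Qed.
End TermModel.

(** * Prime filters *)

Section PrimeFilter.
Variables (L : coHeyting) (p : L -> Prop).
Hypothesis Hp : prime_filter L p.

Lemma prime_one : p (one L).
Proof. apply Hp. Qed.

Lemma prime_zero : ~ p (zero L).
Proof. apply Hp. Qed.

Lemma prime_up a b : p a -> le L a b -> p b.
Proof. apply Hp. Qed.

Lemma prime_meet a b : p a -> p b -> p (meet L a b).
Proof. apply Hp. Qed.

Lemma prime_join a b : p (join L a b) -> p a \/ p b.
Proof. apply Hp. Qed.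

Lemma prime_diff a b : p a -> ~ p b -> p (diff L a b).
Proof.
  intros Ha Hb. destruct (prime_join b (diff L a b)) as [H | H]; [| tauto | exact H].
  eapply prime_up; [exact Ha | apply le_join_diff].
Qed.
End PrimeFilter.

Lemma ht_le_mono (L : coHeyting) m : forall k p, ht_le L m p -> m <= k -> ht_le L k p.
Proof.
  induction m as [| m IH]; intros [| k] p Hm Hk; simpl in *; try lia; auto.
  - intros q Hq Hs. exfalso. eapply Hm; eauto.
  - intros q Hq Hs. apply IH; [apply Hm; assumption | lia].
Qed.

Lemma ht_le_sub (L : coHeyting) k p q : prime_filter L q -> (forall x, q x -> p x) ->
  ht_le L k p -> ht_le L k q.
Proof.
  intros Hq Hqp Hp. destruct (classic (exists x, p x /\ ~ q x)) as [Hs | Hns].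
  - destruct k as [| k]; simpl in Hp.
    + exfalso. eapply Hp; [exact Hq | split; assumption].
    + apply ht_le_mono with k; [apply Hp; [exact Hq | split; assumption] | lia].
  - replace q with p; [exact Hp |]. extensionality x. apply propositional_extensionality.
    split; [| apply Hqp]. intro Hx. apply NNPP. intro Hnx. apply Hns. eauto.
Qed.

Lemma dL_ideal (L : coHeyting) d : ideal L (dL L d).
Proof.
  unfold dL, codim_ge. split; [| split].
  - intros p Hp H0. exfalso. eapply prime_zero; eauto.
  - intros a b Hb Hab p Hp Ha. apply Hb; [exact Hp | eapply prime_up; eauto].
  - intros a b Ha Hb p Hp Hab. destruct (prime_join L p Hp a b Hab); auto.
Qed.

(** * Finite homomorphic images *)

Definition decide (P : Prop) : bool := if excluded_middle_informative P then true else false.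

Lemma decide_true P : decide P = true <-> P.
Proof. unfold decide. destruct excluded_middle_informative; split; intros; congruence || tauto. Qed.

Lemma decide_false P : decide P = false <-> ~ P.
Proof. unfold decide. destruct excluded_middle_informative; split; intros; congruence || tauto. Qed.

Lemma decide_eq P Q : decide P = decide Q -> (P <-> Q).
Proof.
  unfold decide. do 2 destruct excluded_middle_informative; intros; try discriminate; tauto.
Qed.

Definition count_sat {T : Type} (P : T -> Prop) (l : list T) : nat :=
  length (filter (fun y => decide (P y)) l).

Lemma count_sat_le {T} (P Q : T -> Prop) l :
  (forall y, P y -> Q y) -> count_sat P l <= count_sat Q l.
Proof.
  intro HPQ. unfold count_sat. induction l as [| y l IH]; simpl; [lia |].
  destruct (decide (P y)) eqn:HP, (decide (Q y)) eqn:HQ; simpl; try lia.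
  rewrite decide_true in HP. rewrite decide_false in HQ. exfalso; apply HQ, HPQ, HP.
Qed.

Lemma count_sat_lt {T} (P Q : T -> Prop) l z :
  (forall y, P y -> Q y) -> In z l -> Q z -> ~ P z -> count_sat P l < count_sat Q l.
Proof.
  intros HPQ Hz HQz HPz. induction l as [| y l IH]; [destruct Hz |].
  pose proof (count_sat_le P Q l HPQ) as Hle. unfold count_sat in *. simpl.
  destruct Hz as [-> | Hz].
  - apply decide_true in HQz. apply decide_false in HPz. rewrite HQz, HPz. simpl. lia.
  - specialize (IH Hz).
    destruct (decide (P y)) eqn:HP, (decide (Q y)) eqn:HQ; simpl; try lia.
    rewrite decide_true in HP. rewrite decide_false in HQ. exfalso; apply HQ, HPQ, HP.
Qed.

Definition separated_by_finite_images (A : coHeyting) : Prop :=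
  forall a : A, a <> zero A ->
    exists (B : coHeyting) (h : A -> B), hom A B h /\ finite_alg B /\ h a <> zero B.

Definition atom (B : coHeyting) (j : B) : Prop :=
  j <> zero B /\ forall z, le B z j -> z = zero B \/ z = j.

Lemma atom_below (B : coHeyting) : finite_alg B ->
  forall y, y <> zero B -> exists j, atom B j /\ le B j y.
Proof.
  intros [lB HlB] y. remember (count_sat (fun z => le B z y) lB) as N eqn:HN.
  revert y HN. induction N as [N IH] using lt_wf_ind. intros y HN Hy.
  destruct (classic (exists z, le B z y /\ z <> zero B /\ z <> y)) as [[z (Hzy & Hz0 & Hzy')] | Hno].
  - destruct (IH (count_sat (fun w => le B w z) lB)) with (y := z) as [j [Hj Hjz]]; auto.
    + subst N. apply count_sat_lt with (z := y); auto.
      * intros w Hw. eapply le_trans; eauto.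
      * apply le_refl.
      * intro Hyz. apply Hzy'. apply le_antisym; assumption.
    + exists j. split; [exact Hj | eapply le_trans; eauto].
  - exists y. split; [split; [exact Hy |] | apply le_refl].
    intros z Hz. destruct (classic (z = zero B)); auto. destruct (classic (z = y)); auto.
    exfalso; apply Hno; eauto.
Qed.

Lemma atom_join_prime (B : coHeyting) j x y :
  atom B j -> le B j (join B x y) -> le B j x \/ le B j y.
Proof.
  intros [Hj0 Hj] H. apply le_meet_eq in H. rewrite meet_joinDl in H.
  destruct (Hj (meet B j x) (le_meetl _ _ _)) as [Hx | Hx].
  - destruct (Hj (meet B j y) (le_meetl _ _ _)) as [Hy | Hy].
    + rewrite Hx, Hy, join0 in H. congruence.
    + right. rewrite <- Hy. apply le_meetr.
  - left. rewrite <- Hx. apply le_meetr.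
Qed.

Section FiniteImage.
Variables L B : coHeyting.
Variable h : L -> B.
Hypothesis Hh : hom L B h.
Variable lB : list B.
Hypothesis HlB : forall y, In y lB.

Lemma kernel_ideal : ideal L (fun x => h x = zero B).
Proof.
  destruct Hh as (H0 & _ & Hj & _). split; [exact H0 | split].
  - intros x y Hy Hxy. apply le0_eq. rewrite <- Hy. apply (hom_le _ _ _ _ _ Hh Hxy).
  - intros x y Hx Hy. rewrite Hj, Hx, Hy. apply join0.
Qed.

Lemma kernel_quotient_finite : quotient_finite L (fun x => h x = zero B).
Proof.
  destruct Hh as (_ & _ & Hj & _ & Hd).
  set (pre := fun y : B => match excluded_middle_informative (exists x, h x = y) with
              | left H => proj1_sig (constructive_indefinite_description _ H)
              | right _ => zero L end).
  exists (map pre lB). intro x. exists (pre (h x)). split; [apply in_map, HlB |].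
  unfold pre. destruct excluded_middle_informative as [He | He]; [| exfalso; eauto].
  destruct constructive_indefinite_description as [x' Hx']. simpl.
  unfold equiv_mod. rewrite Hj, !Hd, Hx', diff_self. apply join0.
Qed.

Section AtomPreimage.
Variable j : B.
Hypothesis Hj : atom B j.

Definition atom_preimage (x : L) : Prop := le B j (h x).

Lemma atom_preimage_prime : prime_filter L atom_preimage.
Proof.
  pose proof Hh as (H0 & H1 & Hjoin & Hmeet & _). unfold atom_preimage.
  split; [| split; [| split; [| split]]].
  - rewrite H1. apply lex1.
  - intros x y Hx Hxy. eapply le_trans; [exact Hx | apply hom_le; assumption].
  - intros x y Hx Hy. rewrite Hmeet. apply meet_glb; assumption.
  - rewrite H0. intro H. apply (proj1 Hj), le0_eq, H.
  - intros x y Hxy. rewrite Hjoin in Hxy. apply atom_join_prime; assumption.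
Qed.

Definition hom_image (q : L -> Prop) (y : B) : Prop := exists x, q x /\ h x = y.

(* A strictly smaller prime filter below [atom_preimage] has a strictly smaller image,
   because [h] kills the differences that would otherwise witness the inclusion. *)
Lemma hom_image_strict q q' : prime_filter L q' -> (forall x, q x -> atom_preimage x) ->
  strict_sub L q' q -> count_sat (hom_image q') lB < count_sat (hom_image q) lB.
Proof.
  intros Hq' Hqp [Hsub [x [Hx Hnx]]]. apply count_sat_lt with (z := h x).
  - intros y [w [Hw <-]]. exists w. auto.
  - apply HlB.
  - exists x. auto.
  - intros [y [Hy Hyx]].
    destruct (prime_join L q' Hq' x (diff L y x)) as [Hx' | Hd'];
      [eapply prime_up; [exact Hq' | exact Hy | apply le_join_diff] | tauto |].
    apply (proj1 Hj). apply le0_eq. pose proof (Hqp _ (Hsub _ Hd')) as Hjd.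
    unfold atom_preimage in Hjd. destruct Hh as (_ & _ & _ & _ & Hd).
    rewrite Hd, Hyx, diff_self in Hjd. exact Hjd.
Qed.

Lemma atom_preimage_height :
  forall N q, prime_filter L q -> (forall x, q x -> atom_preimage x) ->
    count_sat (hom_image q) lB <= N -> ht_le L N q.
Proof.
  induction N as [| N IH]; intros q Hq Hqp Hc; simpl; intros q' Hq' Hs;
    pose proof (hom_image_strict q q' Hq' Hqp Hs); [lia |].
  apply IH; [exact Hq' | | lia]. intros x Hx. apply Hqp, Hs, Hx.
Qed.
End AtomPreimage.

Lemma finite_image_codim_finite a : h a <> zero B -> codim_finite L a.
Proof.
  intro Ha. destruct (atom_below B (ex_intro _ lB HlB) (h a) Ha) as [j [Hj Hja]].
  exists (atom_preimage j), (count_sat (hom_image (atom_preimage j)) lB).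
  split; [apply atom_preimage_prime, Hj | split; [exact Hja |]].
  apply (atom_preimage_height j Hj); [apply atom_preimage_prime, Hj | auto | lia].
Qed.
End FiniteImage.

Lemma separated_residually_finite A : separated_by_finite_images A -> residually_finite A.
Proof.
  intros Hsep a Ha. destruct (Hsep a Ha) as [B [h (Hh & [lB HlB] & Hha)]].
  exists (fun x => h x = zero B).
  split; [apply kernel_ideal, Hh | split; [exact Hha | apply (kernel_quotient_finite _ _ _ Hh lB HlB)]].
Qed.

Lemma separated_hausdorff A : separated_by_finite_images A -> hausdorff A.
Proof.
  intros Hsep a Ha. destruct (Hsep a Ha) as [B [h (Hh & [lB HlB] & Hha)]].
  apply (finite_image_codim_finite A B h Hh lB HlB a Hha).
Qed.

(** * Finitely generated algebras are precompact *)

Section Countable.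
Variable L : coHeyting.
Variable e : nat -> L.
Hypothesis e_surj : forall x, exists m, e m = x.

Section Separation.
Variable J : L -> Prop.
Hypothesis HJ : ideal L J.
Variable a : L.
Hypothesis Ha : ~ J a.

(* Meet [a] successively with every [e k] that keeps the chain outside [J]; the filter
   generated by the chain is then prime. *)
Fixpoint chain (k : nat) : L :=
  match k with
  | 0 => a
  | S k' => if excluded_middle_informative (J (meet L (chain k') (e k'))) then chain k'
            else meet L (chain k') (e k')
  end.

Lemma chain_notin k : ~ J (chain k).
Proof. induction k; simpl; [exact Ha |]. destruct excluded_middle_informative; assumption. Qed.

Lemma chain_anti k m : k <= m -> le L (chain m) (chain k).
Proof.
  induction 1 as [| m _ IH]; [apply le_refl |]. eapply le_trans; [| exact IH].
  simpl. destruct excluded_middle_informative; [apply le_refl | apply le_meetl].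
Qed.

Lemma chain_step k : ~ J (meet L (chain k) (e k)) -> le L (chain (S k)) (e k).
Proof. intro H. simpl. destruct excluded_middle_informative; [tauto | apply le_meetr]. Qed.

Definition chain_filter (x : L) : Prop := exists k, le L (chain k) x.

Lemma chain_filter_disjoint x : chain_filter x -> ~ J x.
Proof. intros [k Hk] Hx. apply (chain_notin k). eapply ideal_down; eauto. Qed.

Lemma chain_filter_prime : prime_filter L chain_filter.
Proof.
  unfold chain_filter. split; [| split; [| split; [| split]]].
  - exists 0. apply lex1.
  - intros x y [k Hk] Hxy. exists k. eapply le_trans; eauto.
  - intros x y [k Hk] [m Hm]. exists (Nat.max k m). apply meet_glb.
    + apply le_trans with (chain k); [apply chain_anti; lia | exact Hk].
    + apply le_trans with (chain m); [apply chain_anti; lia | exact Hm].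
  - intro H0. apply (chain_filter_disjoint (zero L) H0), ideal0, HJ.
  - intros x y [k Hk]. apply NNPP. intro Hn.
    destruct (e_surj x) as [i <-]. destruct (e_surj y) as [j <-].
    assert (Hi : J (meet L (chain i) (e i))).
    { apply NNPP. intro Hi. apply Hn. left. exists (S i). apply chain_step, Hi. }
    assert (Hj : J (meet L (chain j) (e j))).
    { apply NNPP. intro Hj. apply Hn. right. exists (S j). apply chain_step, Hj. }
    set (m := Nat.max k (Nat.max i j)).
    apply (chain_notin m).
    apply (ideal_down L J HJ) with (join L (meet L (chain i) (e i)) (meet L (chain j) (e j)));
      [apply ideal_join; assumption |].
    assert (Hm : chain m = meet L (chain m) (join L (e i) (e j))).
    { symmetry. apply le_meet_eq. apply le_trans with (chain k); [apply chain_anti; lia | exact Hk]. }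
    rewrite Hm, meet_joinDl. apply join_mono; apply meet_mono; try apply le_refl;
      apply chain_anti; lia.
Qed.
End Separation.

Lemma prime_filter_separation J a : ideal L J -> ~ J a ->
  exists p, prime_filter L p /\ p a /\ forall x, p x -> ~ J x.
Proof.
  intros HJ Ha. exists (chain_filter J a).
  split; [apply chain_filter_prime; assumption |].
  split; [exists 0; apply le_refl | apply chain_filter_disjoint; assumption].
Qed.

Lemma prime_below_diff p a b : prime_filter L p -> p (diff L a b) ->
  exists q, prime_filter L q /\ (forall x, q x -> p x) /\ q a /\ ~ q b.
Proof.
  intros Hp Hab.
  set (J := fun x => exists c, ~ p c /\ le L x (join L b c)).
  assert (HJ : ideal L J).
  { split; [| split].
    - exists (zero L). split; [apply prime_zero, Hp | apply le0x].
    - intros x y [c [Hc Hy]] Hxy. exists c. split; [exact Hc | eapply le_trans; eauto].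
    - intros x y [c [Hc Hx]] [c' [Hc' Hy]]. exists (join L c c'). split.
      + intro H. destruct (prime_join L p Hp c c' H); auto.
      + apply join_lub; [eapply le_trans; [exact Hx |] | eapply le_trans; [exact Hy |]];
          apply join_mono; solve [apply le_refl | apply le_joinl | apply le_joinr]. }
  assert (Ha : ~ J a).
  { intros [c [Hc Hac]]. apply Hc. eapply prime_up; [exact Hp | exact Hab |].
    apply diff_le_iff, Hac. }
  destruct (prime_filter_separation J a HJ Ha) as [q (Hq & Hqa & Hdisj)].
  exists q. split; [exact Hq | split; [| split; [exact Hqa |]]].
  - intros x Hx. apply NNPP. intro Hpx. apply (Hdisj x Hx).
    exists x. split; [exact Hpx | apply le_joinr].
  - intro Hb. apply (Hdisj b Hb). exists (zero L).
    split; [apply prime_zero, Hp | apply le_joinl].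
Qed.
End Countable.

Fixpoint term_of_code (fuel : nat) (k : nat) : term :=
  match fuel with
  | 0 => tZero
  | S fuel' =>
    let (tag, r) := Cantor.of_nat k in
    match tag with
    | 0 => tVar r
    | 1 => tZero
    | 2 => tOne
    | 3 => let (x, y) := Cantor.of_nat r in tJoin (term_of_code fuel' x) (term_of_code fuel' y)
    | 4 => let (x, y) := Cantor.of_nat r in tMeet (term_of_code fuel' x) (term_of_code fuel' y)
    | _ => let (x, y) := Cantor.of_nat r in tDiff (term_of_code fuel' x) (term_of_code fuel' y)
    end
  end.

Fixpoint depth (t : term) : nat :=
  match t with
  | tVar _ | tZero | tOne => 0
  | tJoin a b | tMeet a b | tDiff a b => S (Nat.max (depth a) (depth b))
  end.

Lemma term_of_code_surj t : exists k, forall fuel, depth t < fuel -> term_of_code fuel k = t.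
Proof.
  induction t as [n | | | t1 [k1 H1] t2 [k2 H2] | t1 [k1 H1] t2 [k2 H2] | t1 [k1 H1] t2 [k2 H2]];
  [ exists (Cantor.to_nat (0, n))
  | exists (Cantor.to_nat (1, 0))
  | exists (Cantor.to_nat (2, 0))
  | exists (Cantor.to_nat (3, Cantor.to_nat (k1, k2)))
  | exists (Cantor.to_nat (4, Cantor.to_nat (k1, k2)))
  | exists (Cantor.to_nat (5, Cantor.to_nat (k1, k2))) ];
  intros [| fuel] Hf; simpl depth in Hf; try lia; cbn [term_of_code];
    rewrite Cantor.cancel_of_to; cbv beta iota; try reflexivity;
    rewrite Cantor.cancel_of_to, H1, H2 by lia; reflexivity.
Qed.

Definition term_enum (m : nat) : term := let (fuel, k) := Cantor.of_nat m in term_of_code fuel k.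

Lemma term_enum_surj t : exists m, term_enum m = t.
Proof.
  destruct (term_of_code_surj t) as [k Hk]. exists (Cantor.to_nat (S (depth t), k)).
  unfold term_enum. rewrite Cantor.cancel_of_to. apply Hk. lia.
Qed.

Fixpoint bool_lists (m : nat) : list (list bool) :=
  match m with
  | 0 => [[]]
  | S m' => map (cons true) (bool_lists m') ++ map (cons false) (bool_lists m')
  end.

Lemma in_bool_lists l : In l (bool_lists (length l)).
Proof.
  induction l as [| b l IH]; simpl; [auto |].
  apply in_or_app. destruct b; [left | right]; apply in_map, IH.
Qed.

Lemma app_inj_length {A : Type} (l1 l2 l1' l2' : list A) :
  length l1 = length l1' -> l1 ++ l2 = l1' ++ l2' -> l1 = l1' /\ l2 = l2'.
Proof.
  revert l1'. induction l1 as [| x l1 IH]; intros [| y l1'] Hl H;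
    simpl in *; try discriminate; [auto |].
  injection H as -> H. destruct (IH l1') as [-> ->]; auto.
Qed.

Section FinitelyGenerated.
Variable L : coHeyting.
Variable n : nat.
Variable g : nat -> L.
Hypothesis generated : forall a : L, exists t, vars_lt n t /\ a = eval g t.

Lemma fg_enum_surj x : exists m, eval g (term_enum m) = x.
Proof.
  destruct (generated x) as [t [_ ->]]. destruct (term_enum_surj t) as [m Hm].
  exists m. rewrite Hm. reflexivity.
Qed.

Definition colour (p : L -> Prop) : list bool := map (fun k => decide (p (g k))) (seq 0 n).

Fixpoint code_length (k : nat) : nat :=
  match k with 0 => n | S k' => n + length (bool_lists (code_length k')) end.

Fixpoint code (k : nat) (p : L -> Prop) : list bool :=
  match k with
  | 0 => colour p
  | S k' => colour p ++
      map (fun c => decide (exists q, prime_filter L q /\ strict_sub L q p /\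
                                     ht_le L k' q /\ code k' q = c))
          (bool_lists (code_length k'))
  end.

Lemma length_code k p : length (code k p) = code_length k.
Proof. destruct k; simpl; unfold colour; rewrite ?length_app, !length_map, length_seq; auto. Qed.

Lemma code_colour k p p' : code k p = code k p' -> colour p = colour p'.
Proof.
  destruct k; simpl; [auto |]. intro H.
  apply app_inj_length in H; [tauto | unfold colour; rewrite !length_map; reflexivity].
Qed.

Lemma code_gen k p p' i : code k p = code k p' -> i < n -> (p (g i) <-> p' (g i)).
Proof.
  intros H Hi. apply code_colour in H. apply decide_eq.
  apply (ext_in_map H). apply in_seq. lia.
Qed.

Lemma code_below k p p' q : code (S k) p = code (S k) p' -> prime_filter L q ->
  strict_sub L q p -> ht_le L k q ->
  exists q', prime_filter L q' /\ strict_sub L q' p' /\ ht_le L k q' /\ code k q' = code k q.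
Proof.
  intros H Hq Hs Hh. simpl in H.
  apply app_inj_length in H; [| unfold colour; rewrite !length_map; reflexivity].
  destruct H as [_ H]. eapply ext_in_map in H; [| rewrite <- (length_code k q); apply in_bool_lists].
  apply decide_eq in H. apply H. exists q. auto.
Qed.

(* Two prime filters of height at most [k] with the same code contain the same
   elements; the case of a difference descends to a strictly smaller prime filter
   through [prime_below_diff]. *)
Lemma code_transfer t : vars_lt n t -> forall k p p', prime_filter L p -> prime_filter L p' ->
  ht_le L k p -> ht_le L k p' -> code k p = code k p' -> p (eval g t) -> p' (eval g t).
Proof.
  induction t as [i | | | t1 IH1 t2 IH2 | t1 IH1 t2 IH2 | t1 IH1 t2 IH2];
    simpl; intros Hv k p p' Hp Hp' Hk Hk' Hc H.
  - apply (code_gen k p p'); assumption.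
  - exfalso. exact (prime_zero L p Hp H).
  - apply prime_one, Hp'.
  - destruct Hv as [Hv1 Hv2]. destruct (prime_join L p Hp _ _ H) as [H1 | H2].
    + eapply prime_up; [exact Hp' | exact (IH1 Hv1 k p p' Hp Hp' Hk Hk' Hc H1) | apply le_joinl].
    + eapply prime_up; [exact Hp' | exact (IH2 Hv2 k p p' Hp Hp' Hk Hk' Hc H2) | apply le_joinr].
  - destruct Hv as [Hv1 Hv2]. apply prime_meet; [exact Hp' | |].
    + apply (IH1 Hv1 k p p' Hp Hp' Hk Hk' Hc). eapply prime_up; [exact Hp | exact H | apply le_meetl].
    + apply (IH2 Hv2 k p p' Hp Hp' Hk Hk' Hc). eapply prime_up; [exact Hp | exact H | apply le_meetr].
  - destruct Hv as [Hv1 Hv2].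
    destruct (prime_below_diff L _ fg_enum_surj p _ _ Hp H) as [q (Hq & Hqp & Hq1 & Hq2)].
    destruct (classic (exists x, p x /\ ~ q x)) as [Hs | Hns].
    + destruct k as [| k].
      { exfalso. simpl in Hk. eapply Hk; [exact Hq | split; assumption]. }
      assert (Hkq : ht_le L k q) by (apply Hk; [exact Hq | split; assumption]).
      destruct (code_below k p p' q Hc Hq (conj Hqp Hs) Hkq) as [q' (Hq' & Hs' & Hk'' & Hc')].
      apply (proj1 Hs'). apply prime_diff; [exact Hq' | |].
      * exact (IH1 Hv1 k q q' Hq Hq' Hkq Hk'' (eq_sym Hc') Hq1).
      * intro H2. apply Hq2. exact (IH2 Hv2 k q' q Hq' Hq Hk'' Hkq Hc' H2).
    + assert (Hpq : forall x, p x -> q x) by (intros x Hx; apply NNPP; intro; apply Hns; eauto).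
      apply prime_diff; [exact Hp' | |].
      * exact (IH1 Hv1 k p p' Hp Hp' Hk Hk' Hc (Hqp _ Hq1)).
      * intro H2. apply Hq2, Hpq. exact (IH2 Hv2 k p' p Hp' Hp Hk' Hk (eq_sym Hc) H2).
Qed.

(* Finitely many values, and equal values force [a ≡ b] modulo [dL (D + 1)]. *)
Definition signature (D : nat) (a : L) : list bool :=
  map (fun c => decide (exists p, prime_filter L p /\ ht_le L D p /\ code D p = c /\ p a))
      (bool_lists (code_length D)).

Lemma signature_diff D a b p : signature D a = signature D b -> prime_filter L p ->
  ht_le L D p -> ~ p (diff L a b).
Proof.
  intros Hs Hp Hh Hd.
  destruct (prime_below_diff L _ fg_enum_surj p a b Hp Hd) as [q (Hq & Hqp & Hqa & Hqb)].
  assert (HqD : ht_le L D q) by (eapply ht_le_sub; eauto).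
  unfold signature in Hs.
  eapply ext_in_map in Hs; [| rewrite <- (length_code D q); apply in_bool_lists].
  apply decide_eq in Hs. destruct (proj1 Hs) as [p' (Hp' & Hh' & Hc' & Hb)].
  { exists q. auto. }
  apply Hqb. destruct (generated b) as [tb [Hv ->]].
  apply (code_transfer tb Hv D p' q); auto.
Qed.

Lemma finitely_generated_precompact : precompact L.
Proof.
  intros d Hd. set (D := d - 1). set (m := length (bool_lists (code_length D))).
  set (pick := fun w => match excluded_middle_informative (exists a, signature D a = w) with
               | left H => proj1_sig (constructive_indefinite_description _ H)
               | right _ => zero L end).
  exists (map pick (bool_lists m)). intro a. exists (pick (signature D a)). split.
  - apply in_map. replace m with (length (signature D a)); [apply in_bool_lists |].
    unfold signature. rewrite length_map. reflexivity.
  - unfold pick. destruct excluded_middle_informative as [He | He]; [| exfalso; eauto].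
    destruct constructive_indefinite_description as [b Hb]. simpl.
    intros p Hp Hdd k Hk Hht.
    assert (HD : ht_le L D p) by (apply ht_le_mono with k; [exact Hht | lia]).
    destruct (prime_join L p Hp _ _ Hdd) as [H | H].
    + eapply (signature_diff D a b p); eauto.
    + eapply (signature_diff D b a p); eauto.
Qed.
End FinitelyGenerated.

Definition presentation E (A : coHeyting) n (R : list (term * term)) (g : nat -> A) : Prop :=
  (forall st, In st R -> vars_lt n (fst st) /\ vars_lt n (snd st)) /\
  (forall st, In st R -> eval g (fst st) = eval g (snd st)) /\
  forall B : coHeyting, in_V E B -> forall b : nat -> B,
    (forall st, In st R -> eval b (fst st) = eval b (snd st)) ->
    exists h : A -> B, hom A B h /\ (forall k, k < n -> h (g k) = b k) /\
      forall h' : A -> B, hom A B h' -> (forall k, k < n -> h' (g k) = b k) ->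
        forall a, h' a = h a.

Definition free_basis E (F : coHeyting) (X : Type) (i : X -> F) : Prop :=
  forall B : coHeyting, in_V E B -> forall f : X -> B,
    exists h : F -> B, hom F B h /\ (forall x, h (i x) = f x) /\
      forall h' : F -> B, hom F B h' -> (forall x, h' (i x) = f x) ->
        forall a, h' a = h a.

(* The universal property maps the algebra into the subalgebra of elements of the
   required form; composed with the inclusion this is an endomorphism fixing the
   generators, hence the identity. *)
Lemma presentation_generated E A n R g : in_V E A -> presentation E A n R g ->
  forall a : A, exists t, vars_lt n t /\ a = eval g t.
Proof.
  intros HA (HRv & HRg & Univ).
  set (G := fun a : A => exists t, vars_lt n t /\ a = eval g t).
  assert (G0 : G (zero A)) by (exists tZero; simpl; auto).
  assert (G1 : G (one A)) by (exists tOne; simpl; auto).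
  assert (Gj : forall a b, G a -> G b -> G (join A a b))
    by (intros a b [t1 [H1 ->]] [t2 [H2 ->]]; exists (tJoin t1 t2); simpl; auto).
  assert (Gm : forall a b, G a -> G b -> G (meet A a b))
    by (intros a b [t1 [H1 ->]] [t2 [H2 ->]]; exists (tMeet t1 t2); simpl; auto).
  assert (Gd : forall a b, G a -> G b -> G (diff A a b))
    by (intros a b [t1 [H1 ->]] [t2 [H2 ->]]; exists (tDiff t1 t2); simpl; auto).
  set (SA := subalgebra A G G0 G1 Gj Gm Gd).
  set (b := fun k => match lt_dec k n with
            | left H => exist G (g k) (ex_intro _ (tVar k) (conj H eq_refl)) : SA
            | right _ => exist G (zero A) G0 : SA end).
  assert (Hb : forall k, k < n -> proj1_sig (b k) = g k).
  { intros k Hk. unfold b. destruct (lt_dec k n); [reflexivity | lia]. }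
  assert (Heval : forall t, vars_lt n t -> proj1_sig (eval b t) = eval g t).
  { intros t Hv. rewrite (hom_eval _ _ _ _ _ (subalgebra_incl_hom A G G0 G1 Gj Gm Gd)).
    apply eval_ext with n; assumption. }
  destruct (Univ SA (subalgebra_in_V _ _ _ _ _ _ _ E HA) b) as [h (Hh & Hhg & _)].
  { intros st Hst. apply sig_ext. destruct (HRv st Hst). rewrite !Heval by assumption. auto. }
  destruct (Univ A HA g HRg) as [h0 (_ & _ & Hunique)].
  assert (Hincl : forall a, proj1_sig (h a) = h0 a).
  { apply Hunique.
    - apply hom_comp with SA; [exact Hh | apply subalgebra_incl_hom].
    - intros k Hk. rewrite Hhg by exact Hk. apply Hb, Hk. }
  assert (Hid : forall a, a = h0 a) by (apply Hunique; auto using hom_id).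
  intro a. rewrite (Hid a), <- Hincl. exact (proj2_sig (h a)).
Qed.

Lemma presentation_precompact E A n R g : in_V E A -> presentation E A n R g -> precompact A.
Proof. intros HA Hpres. apply finitely_generated_precompact with n g.
  apply presentation_generated with E R; assumption. Qed.

Section FreeBasis.
Variable F : coHeyting.
Variable X : Type.
Variable i : X -> F.

Definition basis_env (r : nat -> option X) (k : nat) : F :=
  match r k with Some x => i x | None => zero F end.

Lemma free_basis_generated E : in_V E F -> free_basis E F X i ->
  forall a : F, exists t r, a = eval (basis_env r) t.
Proof.
  intros HF Univ.
  set (G := fun a : F => exists t r, a = eval (basis_env r) t).
  assert (G0 : G (zero F)) by (exists tZero, (fun _ => None); reflexivity).
  assert (G1 : G (one F)) by (exists tOne, (fun _ => None); reflexivity).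
  (* Combine two assignments on the even and the odd variables. *)
  assert (Gbin : forall (op : term -> term -> term) (opF : F -> F -> F),
     (forall env u v, eval env (op u v) = opF (eval env u) (eval env v)) ->
     forall a b, G a -> G b -> G (opF a b)).
  { intros op opF Hop a b [t1 [r1 ->]] [t2 [r2 ->]].
    exists (op (subst (fun m => tVar (2 * m)) t1) (subst (fun m => tVar (S (2 * m))) t2)),
      (fun k => if Nat.even k then r1 (Nat.div2 k) else r2 (Nat.div2 k)).
    rewrite Hop, !eval_subst. f_equal; f_equal; extensionality m; cbn [eval]; unfold basis_env;
      rewrite ?Nat.even_even, ?Nat.even_succ, ?Nat.odd_even, ?Nat.div2_double, ?Nat.div2_succ_double;
      reflexivity. }
  assert (Gj : forall a b, G a -> G b -> G (join F a b)) by (apply (Gbin tJoin); reflexivity).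
  assert (Gm : forall a b, G a -> G b -> G (meet F a b)) by (apply (Gbin tMeet); reflexivity).
  assert (Gd : forall a b, G a -> G b -> G (diff F a b)) by (apply (Gbin tDiff); reflexivity).
  set (SF := subalgebra F G G0 G1 Gj Gm Gd).
  set (f := fun x => exist G (i x) (ex_intro _ (tVar 0) (ex_intro _ (fun _ => Some x) eq_refl)) : SF).
  destruct (Univ SF (subalgebra_in_V _ _ _ _ _ _ _ E HF) f) as [h (Hh & Hhi & _)].
  destruct (Univ F HF i) as [h0 (_ & _ & Hunique)].
  assert (Hincl : forall a, proj1_sig (h a) = h0 a).
  { apply Hunique.
    - apply hom_comp with SF; [exact Hh | apply subalgebra_incl_hom].
    - intro x. rewrite Hhi. reflexivity. }
  assert (Hid : forall a, a = h0 a) by (apply Hunique; auto using hom_id).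
  intro a. rewrite (Hid a), <- Hincl. exact (proj2_sig (h a)).
Qed.
End FreeBasis.

(** * The finite model property *)

Definition finitely_nonzero E (t : term) : Prop :=
  exists A : coHeyting, in_V E A /\ finite_alg A /\ exists env : nat -> A, eval env t <> zero A.

Lemma fmp_free_separated E F : fmp E -> is_free E F -> separated_by_finite_images F.
Proof.
  intros Hfmp [HF [X [i Univ]]] a Ha.
  destruct (free_basis_generated F X i E HF Univ a) as [t [r ->]].
  (* Distinct variables may name the same basis element; merge them, so that the finite
     model's assignment factors through [X]. *)
  set (pick := fun x => match excluded_middle_informative (exists m, r m = Some x) with
               | left H => proj1_sig (constructive_indefinite_description _ H)
               | right _ => 0 end).
  assert (Hpick : forall k x, r k = Some x -> r (pick x) = Some x).
  { intros k x Hk. unfold pick. destruct excluded_middle_informative as [He | He]; [| exfalso; eauto].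
    destruct constructive_indefinite_description. simpl. assumption. }
  set (sg := fun k => match r k with None => tZero | Some x => tVar (pick x) end).
  assert (Ht : eval (basis_env F X i r) (subst sg t) = eval (basis_env F X i r) t).
  { rewrite eval_subst. f_equal. extensionality k. unfold sg, basis_env.
    destruct (r k) as [x |] eqn:Hk; simpl; [| reflexivity].
    rewrite (Hpick k x Hk). reflexivity. }
  destruct (Hfmp (subst sg t)) as [B [HB [HfB [env' Hne]]]].
  { exists F. split; [exact HF |]. exists (basis_env F X i r). rewrite Ht. exact Ha. }
  destruct (Univ B HB (fun x => env' (pick x))) as [h (Hh & Hhi & _)].
  exists B, h. split; [exact Hh | split; [exact HfB |]].
  rewrite <- Ht, (hom_eval _ _ _ _ _ Hh), eval_subst. rewrite eval_subst in Hne.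
  replace (fun k => eval (fun k0 => h (basis_env F X i r k0)) (sg k))
    with (fun k => eval env' (sg k)); [exact Hne |].
  extensionality k. unfold sg, basis_env. destruct (r k) as [x |] eqn:Hk; simpl; [| reflexivity].
  rewrite (Hpick k x Hk), Hhi. reflexivity.
Qed.

Definition relator (R : list (term * term)) : term :=
  fold_right (fun st acc => tJoin (tJoin (tDiff (fst st) (snd st)) (tDiff (snd st) (fst st))) acc)
             tZero R.

Lemma eval_relator_eq0 (A : coHeyting) (env : nat -> A) R :
  (forall st, In st R -> eval env (fst st) = eval env (snd st)) -> eval env (relator R) = zero A.
Proof.
  induction R as [| st R IH]; simpl; [reflexivity |]. intro H.
  rewrite IH by auto. rewrite (H st) by auto. rewrite diff_self, !join0. reflexivity.
Qed.

Lemma symdiff_le_eval_relator (A : coHeyting) (env : nat -> A) R st : In st R ->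
  le A (symdiff A (eval env (fst st)) (eval env (snd st))) (eval env (relator R)).
Proof.
  induction R as [| st' R IH]; simpl; [tauto |]. intros [-> | H].
  - apply le_join_of_lel, le_refl.
  - apply le_join_of_ler, IH, H.
Qed.

(* Apply the finite model property to [t - relator R]: in the finite algebra obtained,
   the quotient by the principal ideal of the relator satisfies the relations and still
   separates [t]. *)
Lemma fmp_fp_separated E A : fmp E -> is_fp E A -> separated_by_finite_images A.
Proof.
  intros Hfmp [HA [n [R [g Hpres]]]] a Ha.
  destruct (presentation_generated E A n R g HA Hpres a) as [t [Hv ->]].
  destruct Hpres as (_ & HRg & Univ).
  destruct (Hfmp (tDiff t (relator R))) as [B [HB [[lB HlB] [env Hne]]]].
  { exists A. split; [exact HA |]. exists g. simpl. rewrite eval_relator_eq0 by exact HRg.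
    rewrite diffx0. exact Ha. }
  simpl in Hne. set (r := eval env (relator R)) in *.
  assert (HI : ideal B (fun x => le B x r)).
  { split; [apply le0x | split].
    - intros x y Hy Hxy. eapply le_trans; eauto.
    - intros x y Hx Hy. apply join_lub; assumption. }
  set (q := quotient_map B _ HI).
  destruct (Univ _ (ideal_quotient_in_V B _ HI E HB) (fun k => q (env k))) as [h (Hh & Hhg & _)].
  { intros st Hst. rewrite <- !(hom_eval _ _ _ _ _ (quotient_map_hom B _ HI)).
    apply qclass_eq. apply symdiff_le_eval_relator, Hst. }
  exists (ideal_quotient B _ HI), h. split; [exact Hh | split].
  - exists (map q lB). intro y. destruct (quotient_map_surj B _ HI y) as [b <-]. apply in_map, HlB.
  - rewrite (hom_eval _ _ _ _ _ Hh), (eval_ext _ n t _ (fun k => q (env k))) by assumption.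
    rewrite <- (hom_eval _ _ _ _ _ (quotient_map_hom B _ HI)), quotient_map_eq0.
    intro Hle. apply Hne, diff_eq0, Hle.
Qed.

Lemma finite_quotient_nonzero E (L : coHeyting) I env t : in_V E L -> ideal L I ->
  quotient_finite L I -> ~ I (eval env t) -> finitely_nonzero E t.
Proof.
  intros HL HI Hfin Ht. exists (ideal_quotient L I HI).
  split; [apply ideal_quotient_in_V, HL | split; [apply ideal_quotient_finite, Hfin |]].
  exists (fun k => quotient_map L I HI (env k)).
  rewrite <- (hom_eval _ _ _ _ _ (quotient_map_hom L I HI)), quotient_map_eq0. exact Ht.
Qed.

(* An element of codimension [m] survives in the finite quotient by [dL (m + 1)]. *)
Lemma codim_finite_nonzero E (L : coHeyting) env t : in_V E L -> precompact L ->
  codim_finite L (eval env t) -> finitely_nonzero E t.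
Proof.
  intros HL Hpc [p [m (Hp & Hpt & Hm)]].
  apply (finite_quotient_nonzero E L (dL L (S m)) env t HL (dL_ideal L (S m))).
  - apply Hpc. lia.
  - intro H. apply (H p Hp Hpt m); [lia | exact Hm].
Qed.

Lemma fmp_of_term_models E :
  (forall n t, eval (tgen E n) t <> zero (term_model E n) -> finitely_nonzero E t) -> fmp E.
Proof.
  intros Hterm t [A [HA [env Hne]]]. apply (Hterm (var_bound t)).
  exact (term_model_nonzero E (var_bound t) t A env HA (vars_lt_var_bound t) Hne).
Qed.

Theorem proposition5p4 (E : equations) :
  (fmp E <-> (forall F : coHeyting, is_free E F -> residually_finite F)) /\
  (fmp E <-> (forall F : coHeyting, is_free E F -> hausdorff F)) /\
  (fmp E <-> (forall A : coHeyting, is_fp E A -> precompact A /\ hausdorff A)).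
Proof.
  split; [| split]; split.
  - intros Hfmp F HF. apply separated_residually_finite, (fmp_free_separated E); assumption.
  - intro Hrf. apply fmp_of_term_models. intros n t Ht.
    destruct (Hrf _ (term_model_free E n) _ Ht) as [I (HI & HIt & Hfin)].
    exact (finite_quotient_nonzero E _ I _ t (term_model_in_V E n) HI Hfin HIt).
  - intros Hfmp F HF. apply separated_hausdorff, (fmp_free_separated E); assumption.
  - intro Hhd. apply fmp_of_term_models. intros n t Ht.
    apply (codim_finite_nonzero E (term_model E n) (tgen E n)); [apply term_model_in_V | |].
    + apply finitely_generated_precompact with n (tgen E n), term_model_generated.
    + apply (Hhd _ (term_model_free E n)), Ht.
  - intros Hfmp A HA. split.
    + destruct HA as [HA [n [R [g Hpres]]]]. apply (presentation_precompact E A n R g HA Hpres).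
    + apply separated_hausdorff, (fmp_fp_separated E); assumption.
  - intro Hfp. apply fmp_of_term_models. intros n t Ht.
    destruct (Hfp _ (term_model_fp E n)) as [Hpc Hhd].
    apply (codim_finite_nonzero E (term_model E n) (tgen E n)); [apply term_model_in_V | exact Hpc |].
    apply Hhd, Ht.
Qed.
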